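(* $\mathrm{Sort}(\mathrm{SC}_{\underline{32}1})$ is not a permutation class.
   Context: $\mathfrak S_n$ is the set of permutations of $\{1,\dots,n\}$. A permutation $\pi$ contains a (classical) permutation $\tau$ if some subsequence of $\pi$ has the same relative order as $\tau$. A permutation class is a set $\Pi$ of permutations such that every permutation contained in some $\pi\in\Pi$ is also in $\Pi$. A vincular pattern is a permutation with some entries underlined; a sequence contains it if it has a subsequence with the same relative order in which entries corresponding to adjacent underlined entries occupy consecutive positions. An occurrence of $\underline{32}1$ is $a_j a_{j+1} a_l$ with $l>j+1$ and $a_l<a_{j+1}<a_j$. For a pattern $\sigma$, the map $\mathrm{SC}_\sigma$ acts on $\tau$: read entries left to right; when the next entry $x$ is read, if pushing $x$ yields a stack whose entries read top to bottom (stack adjacency = consecutive positions) avoid $\sigma$, push $x$; otherwise pop the top stack entry to the output and repeat. At the end pop all remaining entries; the output is $\mathrm{SC}_\sigma(\tau)$. West's stack-sorting map is $s=\mathrm{SC}_{21}$. $\mathrm{Sort}_n(\mathrm{SC}_\sigma)=\{\tau\in\mathfrak S_n : s(\mathrm{SC}_\sigma(\tau))=12\cdots n\}$ and $\mathrm{Sort}(\mathrm{SC}_\sigma)=\bigcup_{n\ge1}\mathrm{Sort}_n(\mathrm{SC}_\sigma)$. *)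

From mathcomp Require Import all_boot.
Set Implicit Arguments. Unset Strict Implicit. Unset Printing Implicit Defensive.

Definition is_perm (s : seq nat) : bool :=
  (0 < size s) && perm_eq s (iota 1 (size s)).

Fixpoint all_masks (n : nat) : seq bitseq :=
  if n is n'.+1 then [seq b :: m | b <- [:: false; true], m <- all_masks n']
  else [:: [::]].

Definition same_order (a p : seq nat) : bool :=
  (size a == size p) &&
  all (fun i => all (fun j =>
     (nth 0 a i < nth 0 a j) == (nth 0 p i < nth 0 p j))
       (iota 0 (size p))) (iota 0 (size p)).

(* A vincular pattern: a pattern [vp_pat] together with the list [vp_adj] of
   indices i (0-based) such that entries i and i+1 of the pattern are both
   underlined, i.e. must be matched by entries in consecutive positions. *)
Record vpattern := VPat { vp_pat : seq nat; vp_adj : seq nat }.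

Definition vcontains (s : seq nat) (v : vpattern) : bool :=
  has (fun m =>
         let idx := mask m (iota 0 (size s)) in
         same_order [seq nth 0 s i | i <- idx] (vp_pat v) &&
         all (fun i => nth 0 idx i.+1 == (nth 0 idx i).+1) (vp_adj v))
      (all_masks (size s)).

Definition classical (p : seq nat) : vpattern := VPat p [::].

Definition contains (pi tau : seq nat) : bool := vcontains pi (classical tau).

(* The vincular pattern 32_1 with 3 and 2 underlined (0-based indices 0,1 adjacent). *)
Definition pat_32_1 : vpattern := VPat [:: 3; 2; 1] [:: 0].

(* Stacks are lists read top to bottom (head = top).
   Inserting x into the stack st with pattern-avoidance test [av]:
   returns the new stack and the sequence of entries popped to the output. *)
Fixpoint sc_insert (av : seq nat -> bool) (x : nat) (st : seq nat)
  : seq nat * seq nat :=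
  if av (x :: st) then (x :: st, [::]) else
  match st with
  | [::] => ([:: x], [::])
  | y :: st' => let: (st2, out) := sc_insert av x st' in (st2, y :: out)
  end.

Definition SC (sigma : vpattern) (tau : seq nat) : seq nat :=
  let av := fun st => ~~ vcontains st sigma in
  let: (st, out) :=
    foldl (fun acc x => let: (st, out) := acc in
                        let: (st', popped) := sc_insert av x st in
                        (st', out ++ popped))
          ([::], [::]) tau in
  out ++ st.

Definition west_s (tau : seq nat) : seq nat := SC (classical [:: 2; 1]) tau.

Definition SortSC (sigma : vpattern) (tau : seq nat) : Prop :=
  is_perm tau /\ west_s (SC sigma tau) = iota 1 (size tau).

Definition perm_class (P : seq nat -> Prop) : Prop :=
  (forall pi, P pi -> is_perm pi) /\
  (forall pi tau, P pi -> is_perm tau -> contains pi tau -> P tau).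

Example ex1 : west_s [:: 2; 3; 1] = [:: 2; 1; 3]. Proof. vm_compute. reflexivity. Qed.
Example ex2 : vcontains [:: 3; 2; 4; 1] pat_32_1. Proof. vm_compute. reflexivity. Qed.
Example ex3 : ~~ vcontains [:: 3; 1; 4; 2] pat_32_1. Proof. vm_compute. reflexivity. Qed.
Example ex4 : contains [:: 3; 4; 2; 1] [:: 2; 1]. Proof. vm_compute. reflexivity. Qed.
Example ex5 : SC pat_32_1 [:: 3; 2; 1] = [:: 1; 2; 3].
Proof. vm_compute. reflexivity. Qed.

From mathcomp Require Import all_boot.

(* 2314 is in Sort(SC_32_1): its entries all fit on the stack, which is
   emptied as 4132, and 4132 is West-stack-sortable.  Its pattern 123 is not:
   pushing 3 onto the stack 21 would create 321, so 2 is popped first, giving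
   231, whose stack-sorted image is 213. *)

Lemma perm_classN (P : seq nat -> Prop) (pi tau : seq nat) :
  P pi -> ~ P tau -> is_perm tau -> contains pi tau -> ~ perm_class P.
Proof. by move=> Ppi nPtau tau_perm pi_tau [_ /(_ pi tau Ppi tau_perm pi_tau)]. Qed.

Lemma SC_32_1_2314 : SC pat_32_1 [:: 2; 3; 1; 4] = [:: 4; 1; 3; 2].
Proof. by vm_compute. Qed.

Lemma west_s_4132 : west_s [:: 4; 1; 3; 2] = [:: 1; 2; 3; 4].
Proof. by vm_compute. Qed.

Lemma SC_32_1_123 : SC pat_32_1 [:: 1; 2; 3] = [:: 2; 3; 1].
Proof. by vm_compute. Qed.

Lemma west_s_231 : west_s [:: 2; 3; 1] = [:: 2; 1; 3].
Proof. by vm_compute. Qed.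

Lemma SortSC_32_1_2314 : SortSC pat_32_1 [:: 2; 3; 1; 4].
Proof. by split; [vm_compute | rewrite SC_32_1_2314 west_s_4132]. Qed.

Lemma SortSC_32_1_123N : ~ SortSC pat_32_1 [:: 1; 2; 3].
Proof. by rewrite /SortSC SC_32_1_123 west_s_231; case. Qed.

Lemma contains_2314_123 : contains [:: 2; 3; 1; 4] [:: 1; 2; 3].
Proof. by vm_compute. Qed.

Theorem mainTheorem15 : ~ perm_class (SortSC pat_32_1).
Proof.
exact: perm_classN SortSC_32_1_2314 SortSC_32_1_123N isT contains_2314_123.
Qed.
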